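(* Suppose Assumptions 1, 2 and 3 hold and $\delta_{2r}=c_0/\sqrt r$ for a sufficiently small constant $c_0$. Let $U^{(\lambda)}$ be a point satisfying the first- and second-order necessary conditions for a local minimum of $f^{(\lambda)}$. Then on the event $\mathcal{E}_{\mathsf{Good}}$, \[ \frac{1}{\sqrt{dr}}\|U^{(\lambda)}U^{(\lambda)\top}-M\|_F\le C\sigma \] for a constant $C$ depending on the assumptions. In particular, $\|U^{(\lambda)}U^{(\lambda)\top}-M\|_F<\lambda/(2\delta_{2r})$.
   Context: Setting. Let $d,n,r$ be positive integers and $\sigma>0$. $\mathsf{GOE}(d)$ denotes the law of a symmetric $d\times d$ matrix whose diagonal entries are i.i.d. $N(0,1)$ and whose entries above the diagonal are i.i.d. $N(0,1/2)$, independent of the diagonal. One observes $(y_i,X_i)$, $i=1,\dots,n$, with $y_i=n^{-1/2}\langle X_i,M\rangle+\varepsilon_i$, where $\langle\cdot,\cdot\rangle$ is the Frobenius inner product, $X_i\sim\mathsf{GOE}(d)$, $\varepsilon_i\sim N(0,\sigma^2)$, all mutually independent, and $M$ is a symmetric positive semidefinite matrix of rank $r$. Define $\mathcal{X}(A)_i=n^{-1/2}\langle X_i,A\rangle$. For $U\in\mathbb{R}^{d\times r}$, $f^{(\lambda)}(U)=\frac14\sum_{i=1}^n(y_i-n^{-1/2}\langle X_i,UU^\top\rangle)^2+\frac{\lambda}{2}\|U\|_F^2$. Assumption 1: $M=\sqrt d\,V\Lambda V^\top$ with $V\in\mathbb{R}^{d\times r}$ having orthonormal columns and $\Lambda$ an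 $r\times r$ positive diagonal matrix whose smallest entry $\lambda_r$ satisfies $C_1\sqrt r<\lambda_r/\sigma<C_2\sqrt r$ for sufficiently large constants $C_1,C_2$; moreover $\|M\|/(\lambda_r\sqrt d)\le\kappa$ with $\kappa=O(1)$, and $\sigma\ge\sigma_{\min}>c>0$. Assumption 2: $\gamma_n:=n/(dr)$ satisfies $\gamma_n\ge C_3 r$ for a sufficiently large constant $C_3$. Assumption 3: $C_4\sqrt d\le\lambda/\sigma\le C_5\sqrt d$ for constants $C_4,C_5$. For a fixed constant $\delta_{2r}>0$, $\mathcal{E}_{\mathsf{Good}}$ is the intersection of the events: (i) $\|\frac1n\sum_i\varepsilon_iX_i\|\le 8\sigma\sqrt{d/n}$ (spectral norm); (ii) $(1-\delta_{2r})\|A\|_F^2\le\|\mathcal{X}(A)\|^2\le(1+\delta_{2r})\|A\|_F^2$ for all symmetric $A$ of rank at most $2r$; (iii) $|\frac1n\sum_i\varepsilon_i\langle X_i,A\rangle|\le C\sigma\sqrt{dr/n}\,\|A\|_F$ for all symmetric $A$ of rank at most $2r$. *)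

From HB Require Import structures.
From mathcomp Require Import all_boot all_order all_algebra.
From mathcomp Require Import all_classical all_reals all_analysis.
Set Implicit Arguments. Unset Strict Implicit. Unset Printing Implicit Defensive.
Import Order.TTheory GRing.Theory Num.Theory.
Local Open Scope ring_scope.

Section Defs.
Variable R : realType.

Definition frob {m k : nat} (A B : 'M[R]_(m, k)) : R :=
  \sum_(i < m) \sum_(j < k) A i j * B i j.

Definition frobn {m k : nat} (A : 'M[R]_(m, k)) : R := Num.sqrt (frob A A).

Definition vnorm {m : nat} (x : 'cV[R]_m) : R := Num.sqrt (\sum_(i < m) x i 0 ^+ 2).

Definition opnorm_le {m : nat} (A : 'M[R]_m) (b : R) : Prop :=
  forall x : 'cV[R]_m, vnorm (A *m x) <= b * vnorm x.

Definition mx_symmetric {m : nat} (A : 'M[R]_m) : Prop := A^T = A.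

Definition mx_psd {m : nat} (A : 'M[R]_m) : Prop :=
  forall x : 'cV[R]_m, 0 <= (x^T *m A *m x) 0 0.

Definition sens {n d : nat} (X : 'I_n -> 'M[R]_d) (A : 'M[R]_d) (i : 'I_n) : R :=
  (Num.sqrt (n%:R))^-1 * frob (X i) A.

Definition obs {n d : nat} (X : 'I_n -> 'M[R]_d) (eps : 'I_n -> R) (M : 'M[R]_d)
  (i : 'I_n) : R := sens X M i + eps i.

Definition floss {n d r : nat} (X : 'I_n -> 'M[R]_d) (y : 'I_n -> R) (lam : R)
  (U : 'M[R]_(d, r)) : R :=
  4^-1 * \sum_(i < n) (y i - sens X (U *m U^T) i) ^+ 2 + lam / 2 * frobn U ^+ 2.

(* first- and second-order necessary conditions for a local minimum of f at U,
   expressed through the directional derivatives along every direction V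
   (f is a polynomial, hence smooth): gradient = 0 and Hessian PSD *)
Definition second_order_critical {d r : nat} (f : 'M[R]_(d, r) -> R)
  (U : 'M[R]_(d, r)) : Prop :=
  forall V : 'M[R]_(d, r),
    derive1 (fun t : R => f (U + t *: V)) 0 = 0 /\
    0 <= derive1 (derive1 (fun t : R => f (U + t *: V))) 0.

Definition event_good {n d : nat} (r : nat) (X : 'I_n -> 'M[R]_d) (eps : 'I_n -> R)
  (sigma delta Cev : R) : Prop :=
  opnorm_le (n%:R^-1 *: \sum_(i < n) eps i *: X i)
            (8 * sigma * Num.sqrt (d%:R / n%:R)) /\
  (forall A : 'M[R]_d, mx_symmetric A -> (\rank A <= 2 * r)%N ->
     (1 - delta) * frobn A ^+ 2 <= \sum_(i < n) sens X A i ^+ 2 /\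
     \sum_(i < n) sens X A i ^+ 2 <= (1 + delta) * frobn A ^+ 2) /\
  (forall A : 'M[R]_d, mx_symmetric A -> (\rank A <= 2 * r)%N ->
     `| n%:R^-1 * \sum_(i < n) eps i * frob (X i) A |
       <= Cev * sigma * Num.sqrt ((d * r)%:R / n%:R) * frobn A).

End Defs.

(* Write M = Y Y^T and replace Y by Y Q, where the orthogonal Q maximises
   <U, Y Q>_F over the compact orthogonal group; comparing with the reflected
   and rotated competitors shows that Y^T U is then symmetric positive
   semidefinite.  For this aligned Y, following Ge, Jin and Zheng, subtract four
   times the first-order condition from the second-order condition in the
   direction U - Y: with E = U U^T - M, ||(U - Y)(U - Y)^T||_F^2 <= 2 ||E||_F^2,
   the restricted isometry property, the noise bound on E_Good and
   |tr E| <= sqrt (2r) ||E||_F for the ridge term, this yields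
   ||E||_F^2 / 4 <= 4 (C sigma sqrt (dr) + lambda sqrt r) ||E||_F.
   Assumption 3 turns the right-hand side into O(sigma sqrt (dr)). *)

From HB Require Import structures.
From mathcomp Require Import all_boot all_order all_algebra.
From mathcomp Require Import all_classical all_reals all_analysis.
From mathcomp Require Import ring lra.
Import Order.TTheory GRing.Theory Num.Theory numFieldNormedType.Exports.
Local Open Scope ring_scope.

Set Implicit Arguments. Unset Strict Implicit. Unset Printing Implicit Defensive.

Section Frobenius.
Variable R : realType.
Implicit Types m k : nat.

Lemma frob_tr m k (A B : 'M[R]_(m, k)) : frob A B = \tr (A *m B^T).
Proof.
rewrite /frob /mxtrace; apply: eq_bigr => i _; rewrite mxE.
by apply: eq_bigr => j _; rewrite mxE.
Qed.

Lemma frobC m k (A B : 'M[R]_(m, k)) : frob A B = frob B A.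
Proof. by rewrite /frob; do 2!apply: eq_bigr => ? _; rewrite mulrC. Qed.

Lemma frobDr m k (A B C : 'M[R]_(m, k)) : frob A (B + C) = frob A B + frob A C.
Proof. by rewrite !frob_tr linearD mulmxDr mxtraceD. Qed.

Lemma frobBr m k (A B C : 'M[R]_(m, k)) : frob A (B - C) = frob A B - frob A C.
Proof. by rewrite !frob_tr linearB mulmxBr linearB. Qed.

Lemma frobZr m k a (A B : 'M[R]_(m, k)) : frob A (a *: B) = a * frob A B.
Proof. by rewrite !frob_tr linearZ -scalemxAr mxtraceZ. Qed.

Lemma frobDl m k (A B C : 'M[R]_(m, k)) : frob (B + C) A = frob B A + frob C A.
Proof. by rewrite frobC frobDr !(frobC A). Qed.

Lemma frobBl m k (A B C : 'M[R]_(m, k)) : frob (B - C) A = frob B A - frob C A.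
Proof. by rewrite frobC frobBr !(frobC A). Qed.

Lemma frobZl m k a (A B : 'M[R]_(m, k)) : frob (a *: B) A = a * frob B A.
Proof. by rewrite frobC frobZr frobC. Qed.

Lemma frob_ge0 m k (A : 'M[R]_(m, k)) : 0 <= frob A A.
Proof. by do 2!apply: sumr_ge0 => ? _; rewrite -expr2 sqr_ge0. Qed.

Lemma frobn_ge0 m k (A : 'M[R]_(m, k)) : 0 <= frobn A.
Proof. exact: sqrtr_ge0. Qed.

Lemma frobn_sqr m k (A : 'M[R]_(m, k)) : frobn A ^+ 2 = frob A A.
Proof. by rewrite sqr_sqrtr ?frob_ge0. Qed.

Lemma frob_eq0 m k (A : 'M[R]_(m, k)) : frob A A = 0 -> A = 0.
Proof.
have mul_self_ge0 (x : R) : 0 <= x * x by rewrite -expr2 sqr_ge0.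
move=> /eqP; rewrite psumr_eq0 => [/allP A0|i _]; last by apply: sumr_ge0.
apply/matrixP => i j; move: (A0 i (mem_index_enum _)); rewrite /= psumr_eq0 //.
by move=> /allP /(_ j (mem_index_enum _)); rewrite mulf_eq0 orbb mxE => /eqP.
Qed.

Lemma frob_CauchySchwarz m k (A B : 'M[R]_(m, k)) :
  frob A B ^+ 2 <= frob A A * frob B B.
Proof.
have [/[dup] /frob_eq0 -> ->|B0] := eqVneq (frob B B) 0.
  by rewrite -(scale0r 0) frobZr !mul0r expr0n mulr0.
have Bpos : 0 < frob B B by rewrite lt_def B0 frob_ge0.
have := frob_ge0 (frob B B *: A - frob A B *: B).
rewrite frobBl !frobBr !frobZl !frobZr (frobC B A) => h.
have : 0 <= frob B B * (frob A A * frob B B - frob A B ^+ 2) by lra.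
by rewrite pmulr_rge0 // subr_ge0.
Qed.

Lemma normr_frob_le m k (A B : 'M[R]_(m, k)) : `|frob A B| <= frobn A * frobn B.
Proof.
rewrite -(@ler_pXn2r _ 2) ?nnegrE ?mulr_ge0 ?frobn_ge0 //.
by rewrite real_normK ?num_real // exprMn !frobn_sqr frob_CauchySchwarz.
Qed.

End Frobenius.

Section TraceBounds.
Variable R : realType.

Lemma gram_unitmx k d (B : 'M[R]_(k, d)) : row_free B -> B *m B^T \in unitmx.
Proof.
move=> freeB; rewrite -row_free_unit; apply: inj_row_free => v vBB0.
have : frob (v *m B) (v *m B) = 0.
  by rewrite frob_tr trmx_mul mulmxA -(mulmxA v) vBB0 mul0mx mxtrace0.
by move/frob_eq0/eqP; rewrite mulmx_free_eq0 // => /eqP.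
Qed.

(* [Z] is fixed by the orthogonal projection [P] onto its row space, and
   [frobn P = sqrt (tr P) = sqrt (rank Z)]. *)
Lemma normr_mxtrace_le d (Z : 'M[R]_d) :
  `|\tr Z| <= Num.sqrt (\rank Z)%:R * frobn Z.
Proof.
have [C ZCB] : exists C, Z = C *m row_base Z.
  by exists (Z *m pinvmx (row_base Z)); rewrite mulmxKpV // eq_row_base.
have freeB := row_base_free Z; move: (row_base Z) freeB ZCB => B freeB ZCB.
set G := B *m B^T; set P := B^T *m invmx G *m B.
have Gu : G \in unitmx by apply: gram_unitmx.
have ZP : Z *m P = Z.
  by rewrite {1}ZCB /P !mulmxA -(mulmxA C B) -/G -(mulmxA C G) mulmxV // mulmx1 -ZCB.
have PT : P^T = P by rewrite /P !trmx_mul trmxK trmx_inv trmx_mul trmxK mulmxA.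
have PP : P *m P = P by rewrite /P !mulmxA -(mulmxA _ B) -/G -(mulmxA _ G) mulmxV // mulmx1.
have trP : \tr P = (\rank Z)%:R.
  by rewrite /P mxtrace_mulC mulmxA -/G mulmxV // mxtrace1.
have -> : \tr Z = frob Z P^T by rewrite frob_tr trmxK ZP.
apply: le_trans (normr_frob_le _ _) _; rewrite mulrC ler_wpM2r ?frobn_ge0 //.
by rewrite /frobn frob_tr trmxK PT PP trP.
Qed.

Lemma mxtrace_mulBl n (A B C : 'M[R]_n) : \tr ((A - B) *m C) = \tr (A *m C) - \tr (B *m C).
Proof. by rewrite mulmxBl raddfB. Qed.

Lemma mxtrace_mulBr n (A B C : 'M[R]_n) : \tr (A *m (B - C)) = \tr (A *m B) - \tr (A *m C).
Proof. by rewrite mulmxBr raddfB. Qed.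

Lemma mxtrace_mul4 d r (A B C D : 'M[R]_(d, r)) :
  \tr (A *m B^T *m (C *m D^T)) = \tr (B^T *m C *m (D^T *m A)).
Proof.
by rewrite mulmxA mxtrace_mulC !mulmxA -(mulmxA (D^T *m A)) mxtrace_mulC !mulmxA.
Qed.

Lemma mxtrace_psd_ge0 d r (D : 'M[R]_(d, r)) (N : 'M[R]_r) :
  mx_psd N -> 0 <= \tr (D^T *m D *m N).
Proof.
move=> psdN; rewrite -mulmxA mxtrace_mulC; apply: sumr_ge0 => k _.
have entry (A : 'M[R]_d) : ((delta_mx 0 k : 'rV_d) *m A *m (delta_mx k 0 : 'cV_d)) 0 0 = A k k.
  by rewrite -rowE -colE !mxE.
have := psdN (D^T *m delta_mx k 0).
by rewrite trmx_mul trmxK trmx_delta -entry !mulmxA.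
Qed.

(* From Ge, Jin and Zheng; this is where the alignment of [Y] with [U] is used. *)
Lemma frob_outer_sub_le d r (U Y : 'M[R]_(d, r)) :
  mx_symmetric (Y^T *m U) -> mx_psd (Y^T *m U) ->
  frob ((U - Y) *m (U - Y)^T) ((U - Y) *m (U - Y)^T)
    <= 2 * frob (U *m U^T - Y *m Y^T) (U *m U^T - Y *m Y^T).
Proof.
move=> symN psdN; set N := Y^T *m U; set P := U^T *m U; set Q := Y^T *m Y.
have NT : U^T *m Y = N by rewrite /N -symN trmx_mul trmxK.
set T := P - N - (N - Q).
have DDT : (U - Y)^T *m (U - Y) = T.
  have -> : (U - Y)^T = U^T - Y^T by rewrite linearB.
  by rewrite mulmxBl !mulmxBr NT.
have -> : frob ((U - Y) *m (U - Y)^T) ((U - Y) *m (U - Y)^T) = \tr (T *m T).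
  by rewrite frob_tr trmx_mul trmxK -!mulmxA mxtrace_mulC !mulmxA DDT -mulmxA DDT.
have -> : frob (U *m U^T - Y *m Y^T) (U *m U^T - Y *m Y^T)
          = \tr (P *m P) - (\tr (N *m N) + \tr (N *m N)) + \tr (Q *m Q).
  rewrite frob_tr [(_ - _)^T]linearB /= !trmx_mul !trmxK mxtrace_mulBl !mxtrace_mulBr.
  by rewrite !mxtrace_mul4 NT -/P -/Q -/N; ring.
have PQ2 : 0 <= \tr ((P - Q) *m (P - Q)).
  have PQT : (P - Q)^T = P - Q by rewrite [(_ - _)^T]linearB /= !trmx_mul !trmxK.
  by rewrite -{2}PQT -frob_tr frob_ge0.
have := mxtrace_psd_ge0 (U - Y) psdN; rewrite DDT -/N => TN.
move: PQ2 TN; rewrite /T !(mxtrace_mulBl, mxtrace_mulBr).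
rewrite (mxtrace_mulC Q P) (mxtrace_mulC N P) (mxtrace_mulC N Q).
move: (\tr (P *m P)) (\tr (Q *m Q)) (\tr (N *m N)) (\tr (P *m Q)) (\tr (P *m N)) (\tr (Q *m N)).
by move=> *; lra.
Qed.

End TraceBounds.

Section Reflections.
Variables (R : realType) (r : nat).
Implicit Types (x y u v : 'cV[R]_r) (G N H : 'M[R]_r).

Definition bform G u v : R := (u^T *m G *m v) 0 0.

Lemma bformDl G u1 u2 v : bform G (u1 + u2) v = bform G u1 v + bform G u2 v.
Proof. by rewrite /bform linearD !mulmxDl mxE. Qed.

Lemma bformDr G u v1 v2 : bform G u (v1 + v2) = bform G u v1 + bform G u v2.
Proof. by rewrite /bform !mulmxDr mxE. Qed.

Lemma bformZl G a u v : bform G (a *: u) v = a * bform G u v.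
Proof. by rewrite /bform linearZ -!scalemxAl mxE. Qed.

Lemma bformZr G a u v : bform G u (a *: v) = a * bform G u v.
Proof. by rewrite /bform -!scalemxAr mxE. Qed.

Lemma bform_delta G i j : bform G (delta_mx i 0) (delta_mx j 0) = G i j.
Proof. by rewrite /bform trmx_delta -rowE -colE !mxE. Qed.

Lemma bform1_gt0 x : x != 0 -> 0 < bform 1%:M x x.
Proof.
move=> x0; have -> : bform 1%:M x x = frob x x.
  by rewrite /bform mulmx1 frob_tr mxtrace_mulC /mxtrace big_ord1.
by rewrite lt_def frob_ge0 andbT; apply: contraNneq x0 => /frob_eq0 ->.
Qed.

Lemma mulmx_outer x y : x *m x^T *m (y *m y^T) = bform 1%:M x y *: (x *m y^T).
Proof.
have xy : x^T *m y = (bform 1%:M x y)%:M by rewrite /bform mulmx1 -mx11_scalar.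
by rewrite -mulmxA (mulmxA x^T) xy mul_scalar_mx scalemxAr.
Qed.

Lemma mxtrace_mul_outer N x y : \tr (N *m (x *m y^T)) = bform N y x.
Proof. by rewrite mulmxA mxtrace_mulC mulmxA /mxtrace big_ord1. Qed.

Definition householder x : 'M[R]_r := 1%:M - (2 / bform 1%:M x x) *: (x *m x^T).

Lemma householder_orthogonal x : x != 0 -> (householder x)^T *m householder x = 1%:M.
Proof.
move=> /bform1_gt0 xpos.
have -> : (householder x)^T = householder x.
  by rewrite /householder linearB linearZ /= trmx_mul trmxK trmx1.
rewrite /householder mulmxBl !mulmxBr mul1mx mulmx1 -!scalemxAl -!scalemxAr.
rewrite mulmx_outer !scalerA mul1mx; set P := x *m x^T.
by apply/matrixP => i j; rewrite !mxE; field; rewrite gt_eqF.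
Qed.

Lemma mxtrace_mul_householder N x :
  \tr (N *m householder x) = \tr N - 2 / bform 1%:M x x * bform N x x.
Proof. by rewrite mulmxBr mulmx1 raddfB /= -scalemxAr mxtraceZ mxtrace_mul_outer. Qed.

Lemma mxtrace_mul_householder2 N x y :
  \tr (N *m (householder x *m householder y)) = \tr N
    - 2 / bform 1%:M x x * bform N x x - 2 / bform 1%:M y y * bform N y y
    + 2 / bform 1%:M x x * (2 / bform 1%:M y y) * (bform 1%:M x y * bform N y x).
Proof.
rewrite /householder mulmxBl !mulmxBr mul1mx mulmx1 -!scalemxAl -!scalemxAr.
rewrite mulmx_outer mul1mx mulmx1 -!scalemxAr scalerA !raddfB /= !mxtraceZ.
by rewrite !mxtrace_mul_outer; ring.
Qed.

Lemma orthogonal_mul H1 H2 : H1^T *m H1 = 1%:M -> H2^T *m H2 = 1%:M ->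
  (H1 *m H2)^T *m (H1 *m H2) = 1%:M.
Proof. by move=> H1o H2o; rewrite trmx_mul mulmxA -(mulmxA H2^T) H1o mulmx1. Qed.

End Reflections.

Section TraceMaximizer.
Variables (R : realType) (r : nat).
Implicit Types N : 'M[R]_r.

Lemma linear_le_quadratic_eq0 (a b : R) : (forall t, t * b <= t ^+ 2 * a) -> b = 0.
Proof.
move=> le_ab; set c := `|a| + 1.
have cpos : 0 < c by rewrite ltr_pwDr ?normr_ge0.
have ac : a <= c - 1 by rewrite addrK ler_norm.
have tc : b / c * c = b by rewrite divfK ?gt_eqF.
move: (le_ab (b / c)) tc; set t := b / c => le_t tc.
have : t ^+ 2 * c <= t ^+ 2 * (c - 1).
  by apply: le_trans (ler_wpM2l (sqr_ge0 t) ac); rewrite expr2 -mulrA tc.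
rewrite mulrBr mulr1 lerBrDr addrC -lerBrDr subrr => t2_le0.
have /eqP t0 : t == 0 by rewrite -sqrf_eq0 eq_le t2_le0 sqr_ge0.
by rewrite -tc t0 mul0r.
Qed.

Section Maximizer.
Variable N : 'M[R]_r.
Hypothesis Nmax : forall H : 'M[R]_r, H^T *m H = 1%:M -> \tr (N *m H) <= \tr N.

Lemma mxtrace_max_psd : mx_psd N.
Proof.
move=> x; have [->|x0] := eqVneq x 0; first by rewrite mulmx0 mxE.
have := Nmax (householder_orthogonal x0); rewrite mxtrace_mul_householder => le_x.
have xpos := bform1_gt0 x0.
have : 0 <= 2 / bform 1%:M x x * bform N x x by lra.
by rewrite pmulr_rge0 // divr_gt0.
Qed.

(* Compare [N] with its product with the rotation [householder x *m householder y]
   in the plane of [e_i] and [e_j], where [x = e_i] and [y = e_i + t e_j]. *)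
Lemma mxtrace_max_skew_le i j : i != j ->
  forall t, t * (N j i - N i j) <= t ^+ 2 * (N i i + N j j).
Proof.
move=> ij t; set x : 'cV[R]_r := delta_mx i 0; set y := x + t *: delta_mx j 0.
have x0 : x != 0.
  by apply/negP => /eqP/matrixP/(_ i 0); rewrite !mxE !eqxx => /eqP; rewrite oner_eq0.
have y0 : y != 0.
  apply/negP => /eqP/matrixP/(_ i 0); rewrite !mxE !eqxx (negbTE ij) mulr0 addr0.
  by move=> /eqP; rewrite oner_eq0.
have := Nmax (orthogonal_mul (householder_orthogonal x0) (householder_orthogonal y0)).
rewrite mxtrace_mul_householder2 /y /x !(bformDl, bformDr, bformZl, bformZr, bform_delta).
rewrite !mxE !eqxx (negbTE ij) eq_sym (negbTE ij) /= ?mulr0 ?addr0 ?add0r ?mulr1 ?mul1r ?divr1.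
set w := 1 + t * t; set a1 := N i i + _ + _; set a2 := N i i + _.
have wpos : 0 < w by rewrite /w; nra.
have wV : w * w^-1 = 1 by rewrite mulfV // gt_eqF.
move=> le_trNH; have : 0 <= w * (2 * N i i + 2 * w^-1 * a1 - 4 * w^-1 * a2).
  by apply: mulr_ge0; [exact: ltW | move: le_trNH; lra].
have -> : w * (2 * N i i + 2 * w^-1 * a1 - 4 * w^-1 * a2)
          = 2 * w * N i i + 2 * (w * w^-1) * a1 - 4 * (w * w^-1) * a2 by ring.
by rewrite wV /w /a1 /a2; nra.
Qed.

Lemma mxtrace_max_sym : mx_symmetric N.
Proof.
apply/matrixP => i j; rewrite mxE; have [-> //|ij] := eqVneq i j.
by apply/eqP; rewrite -subr_eq0; apply/eqP/(linear_le_quadratic_eq0 (mxtrace_max_skew_le ij)).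
Qed.

End Maximizer.
End TraceMaximizer.

Section Alignment.
Variable R : realType.
Local Open Scope classical_set_scope.

Lemma continuous_sum (T : topologicalType) (I : finType) (F : I -> T -> R) :
  (forall i, continuous (F i)) -> continuous (fun x => \sum_i F i x).
Proof. by move=> Fc; apply: (continuous_big add_continuous) => i _; apply: Fc. Qed.

Lemma continuous_scaled_coord n (a : R) (k : 'I_n) :
  continuous (fun v : 'rV[R]_n => a * v 0 k).
Proof. by move=> v; apply: continuousM; [apply: cst_continuous | apply: coord_continuous]. Qed.

(* Orthogonal [r x r] matrices, flattened into row vectors, where compactness
   of bounded closed sets is available. *)
Definition orthogonal_rV r : set 'rV[R]_(r * r) :=
  [set v | (vec_mx v)^T *m vec_mx v = 1%:M].
Arguments orthogonal_rV : clear implicits.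

Lemma orthogonal_rV_closed r : closed (orthogonal_rV r).
Proof.
have -> : orthogonal_rV r = \bigcap_(p in [set: 'I_r * 'I_r])
   ((fun v : 'rV[R]_(r * r) =>
       \sum_k v 0 (mxvec_index k p.1) * v 0 (mxvec_index k p.2))
     @^-1` [set x | x = (1%:M : 'M[R]_r) p.1 p.2]).
  apply/seteqP; split => v /=.
    by move=> vo p _ /=; rewrite -vo mxE; apply: eq_bigr => k _; rewrite !mxE.
  move=> vo; apply/matrixP => i j; rewrite -(vo (i, j)) //= mxE.
  by apply: eq_bigr => k _; rewrite !mxE.
apply: closed_bigI => p _; apply: preimage_closed; last exact: closed_eq.
move=> v _; apply: continuous_sum => k {}v.
by apply: continuousM; apply: coord_continuous.
Qed.

Lemma orthogonal_entry_le1 r (Q : 'M[R]_r) i j : Q^T *m Q = 1%:M -> `|Q i j| <= 1.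
Proof.
move=> Qo; rewrite -(@ler_pXn2r _ 2) ?nnegrE // expr1n real_normK ?num_real //.
have <- : (Q^T *m Q) j j = 1 by rewrite Qo mxE eqxx.
rewrite mxE (bigD1 i) //= mxE -expr2 lerDl.
by apply: sumr_ge0 => k _; rewrite mxE -expr2 sqr_ge0.
Qed.

Lemma orthogonal_rV_compact r : compact (orthogonal_rV r).
Proof.
apply: bounded_closed_compact; last exact: orthogonal_rV_closed.
exists 1; split=> [|M M1 v vo]; first exact: num_real.
rewrite /Num.norm /= mx_normrE; apply: bigmax_le => [|[i k] _ /=].
  exact: ltW (lt_trans ltr01 M1).
apply: le_trans (ltW M1); rewrite (ord1 i); case: (mxvec_indexP k) => a b.
by have := orthogonal_entry_le1 a b vo; rewrite mxE.
Qed.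

Lemma exists_aligning_orthogonal d r (U Y0 : 'M[R]_(d, r)) : exists Q : 'M[R]_r,
  Q^T *m Q = 1%:M /\ forall H : 'M[R]_r, H^T *m H = 1%:M ->
   \tr ((Y0 *m Q)^T *m U *m H) <= \tr ((Y0 *m Q)^T *m U).
Proof.
pose f v := frob U (Y0 *m vec_mx v).
have fc : continuous f.
  have -> : f = fun v => \sum_i \sum_j \sum_k U i j * Y0 i k * v 0 (mxvec_index k j).
    apply/funext => v; rewrite /f /frob; apply: eq_bigr => i _; apply: eq_bigr => j _.
    by rewrite mxE mulr_sumr; apply: eq_bigr => k _; rewrite mxE mulrA.
  by do 3!apply: continuous_sum => ?; apply: continuous_scaled_coord.
have [|c /[!inE] co cmax] := compact_EVT_max _ (@orthogonal_rV_compact r)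
                               (continuous_subspaceT fc).
  by exists (mxvec 1%:M); rewrite /orthogonal_rV /= mxvecK trmx1 mulmx1.
exists (vec_mx c); split => // H Ho.
have HHT : H *m H^T = 1%:M by apply: mulmx1C.
have := cmax (mxvec (vec_mx c *m H^T)).
rewrite /f inE /orthogonal_rV /= mxvecK trmx_mul trmxK mulmxA -(mulmxA H) co mulmx1 HHT.
move=> /(_ erefl); rewrite !frob_tr !trmx_mul trmxK mxtrace_mulC [X in _ <= X]mxtrace_mulC.
by rewrite -!mulmxA (mxtrace_mulC H) !mulmxA.
Qed.

End Alignment.

Section CriticalPoints.
Variable R : realType.

Lemma sensD n d (X : 'I_n -> 'M[R]_d) A B i :
  sens X (A + B) i = sens X A i + sens X B i.
Proof. by rewrite /sens frobDr mulrDr. Qed.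

Lemma sensB n d (X : 'I_n -> 'M[R]_d) A B i :
  sens X (A - B) i = sens X A i - sens X B i.
Proof. by rewrite /sens frobBr mulrBr. Qed.

Lemma sensZ n d (X : 'I_n -> 'M[R]_d) a A i : sens X (a *: A) i = a * sens X A i.
Proof. by rewrite /sens frobZr mulrCA. Qed.

Lemma quartic_horner (I : finType) (a b c : I -> R) (k m p q w t : R) :
  k * \sum_i (a i + b i * t + c i * t ^+ 2) ^+ 2 + m * (p + 2 * q * t + w * t ^+ 2) =
  (Poly [:: k * \sum_i a i ^+ 2 + m * p; k * \sum_i (2 * a i * b i) + 2 * m * q;
           k * \sum_i (b i ^+ 2 + 2 * a i * c i) + m * w; k * \sum_i (2 * b i * c i);
           k * \sum_i c i ^+ 2]).[t].
Proof.
have -> : \sum_i (a i + b i * t + c i * t ^+ 2) ^+ 2 =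
   \sum_i a i ^+ 2 + (\sum_i (2 * a i * b i)) * t
   + (\sum_i (b i ^+ 2 + 2 * a i * c i)) * t ^+ 2
   + (\sum_i (2 * b i * c i)) * t ^+ 3 + (\sum_i c i ^+ 2) * t ^+ 4.
  by rewrite !mulr_suml -!big_split /=; apply: eq_bigr => i _; ring.
by rewrite horner_Poly /= mul0r add0r; ring.
Qed.

Lemma derive1_horner0 (P : {poly R}) :
  derive1 (horner P) 0 = P`_1 /\ derive1 (derive1 (horner P)) 0 = P`_2 *+ 2.
Proof. by rewrite -!derivE !horner_coef0 !coef_deriv. Qed.

(* [f (U + t V)] is a quartic polynomial in [t]; its first two Taylor
   coefficients at [0] give the gradient and Hessian of [f] at [U] along [V]. *)
Lemma second_order_critical_dir n d r (X : 'I_n -> 'M[R]_d) (eps : 'I_n -> R)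
    (M : 'M[R]_d) lam (U V : 'M[R]_(d, r)) :
  second_order_critical (floss X (obs X eps M) lam) U ->
  let res i := eps i - sens X (U *m U^T - M) i in
  - 2^-1 * \sum_i res i * sens X (U *m V^T + V *m U^T) i + lam * frob U V = 0 /\
  0 <= 2^-1 * \sum_i sens X (U *m V^T + V *m U^T) i ^+ 2
       - \sum_i res i * sens X (V *m V^T) i + lam * frob V V.
Proof.
move=> /(_ V) + res.
set b := fun i => - sens X (U *m V^T + V *m U^T) i.
set c := fun i => - sens X (V *m V^T) i.
set P := Poly [:: 4^-1 * \sum_i res i ^+ 2 + lam / 2 * frob U U;
                  4^-1 * \sum_i (2 * res i * b i) + 2 * (lam / 2) * frob U V;
                  4^-1 * \sum_i (b i ^+ 2 + 2 * res i * c i) + lam / 2 * frob V V;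
                  4^-1 * \sum_i (2 * b i * c i); 4^-1 * \sum_i c i ^+ 2].
have -> : (fun t => floss X (obs X eps M) lam (U + t *: V)) = horner P.
  apply/funext => t; rewrite -quartic_horner /floss frobn_sqr; congr (_ * _ + _ * _).
    apply: eq_bigr => i _; congr (_ ^+ 2).
    rewrite /obs /res /b /c [(_ + _)^T]linearD /= [(_ *: _)^T]linearZ /= !mulmxDl !mulmxDr.
    by rewrite -!scalemxAl -!scalemxAr scalerA !sensB !sensD !sensZ; ring.
  by rewrite !(frobDl, frobDr, frobZl, frobZr) (frobC V U); ring.
have [-> ->] := derive1_horner0 P; rewrite !coef_Poly /= => -[grad0 hess_ge0].
have sum_rb : \sum_i 2 * res i * b i
              = -2 * \sum_i res i * sens X (U *m V^T + V *m U^T) i.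
  by rewrite mulr_sumr; apply: eq_bigr => i _; rewrite /b; ring.
have sum_bc : \sum_i (b i ^+ 2 + 2 * res i * c i)
    = \sum_i sens X (U *m V^T + V *m U^T) i ^+ 2 - 2 * \sum_i res i * sens X (V *m V^T) i.
  by rewrite mulr_sumr -sumrB; apply: eq_bigr => i _; rewrite /b /c; ring.
rewrite sum_rb in grad0; rewrite sum_bc mulr2n in hess_ge0.
by split; lra.
Qed.

End CriticalPoints.

Section ErrorBound.
Variable R : realType.

Lemma rank_mul_tr_le d r (A B : 'M[R]_(d, r)) : (\rank (A *m B^T)%R <= r)%N.
Proof. exact: leq_trans (mxrankM_maxl _ _) (rank_leq_col _). Qed.

Lemma rank_outer_sub_le d r (A B : 'M[R]_(d, r)) :
  (\rank (A *m A^T - B *m B^T)%R <= 2 * r)%N.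
Proof.
apply: leq_trans (mxrank_add _ _) _; rewrite mxrank_opp mul2n -addnn.
by apply: leq_add; apply: rank_mul_tr_le.
Qed.

Lemma mx_symmetric_outer d r (A : 'M[R]_(d, r)) : mx_symmetric (A *m A^T).
Proof. by rewrite /mx_symmetric trmx_mul trmxK. Qed.

Lemma mx_symmetric_outer_sub d r (A B : 'M[R]_(d, r)) :
  mx_symmetric (A *m A^T - B *m B^T).
Proof. by rewrite /mx_symmetric linearB /= !mx_symmetric_outer. Qed.

Lemma regulariser_descent_le d r (U Y : 'M[R]_(d, r)) :
  frob (U - Y) (U - Y) - 4 * frob U (U - Y)
    <= 4 * Num.sqrt r%:R * frobn (U *m U^T - Y *m Y^T).
Proof.
set E := U *m U^T - Y *m Y^T.
have trE : \tr E = frob U U - frob Y Y by rewrite /E raddfB /= !frob_tr.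
have le_trE : frob (U - Y) (U - Y) - 4 * frob U (U - Y) <= - 2 * \tr E.
  have := frob_ge0 (U - Y); rewrite trE !(frobBl, frobBr) (frobC Y U); lra.
have sqrt_rank : Num.sqrt (\rank E)%:R <= 2 * Num.sqrt r%:R :> R.
  rewrite -(@ler_pXn2r _ 2) ?nnegrE ?mulr_ge0 ?sqrtr_ge0 // exprMn !sqr_sqrtr ?ler0n //.
  have := rank_outer_sub_le U Y; rewrite -(ler_nat R) natrM -/E.
  have : 0 <= r%:R :> R by rewrite ler0n.
  lra.
have := ler_wpM2r (frobn_ge0 E) sqrt_rank.
have := normr_mxtrace_le E; have := ler_norm (- \tr E); rewrite normrN; lra.
Qed.

Lemma sum_noise_sens_le n d (X : 'I_n -> 'M[R]_d) (eps : 'I_n -> R) (A : 'M[R]_d) (K m : R) :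
  (0 < n)%N -> 0 <= m ->
  `| n%:R^-1 * \sum_(i < n) eps i * frob (X i) A | <= K * Num.sqrt (m / n%:R) * frobn A ->
  `| \sum_i eps i * sens X A i | <= K * Num.sqrt m * frobn A.
Proof.
move=> n0 m0; pose sn : R := Num.sqrt n%:R.
have npos : 0 < n%:R :> R by rewrite ltr0n.
have snpos : 0 < sn by rewrite sqrtr_gt0.
have -> : \sum_i eps i * sens X A i = sn * (n%:R^-1 * \sum_(i < n) eps i * frob (X i) A).
  have sn_n : sn * n%:R^-1 = sn^-1.
    by rewrite -[n%:R](sqr_sqrtr (ltW npos)) -/sn expr2 invfM mulrA divff ?mul1r ?gt_eqF.
  by rewrite mulrA sn_n mulr_sumr; apply: eq_bigr => i _; rewrite /sens mulrCA.
move=> noise; rewrite normrM ger0_norm ?(ltW snpos) //.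
apply: le_trans (ler_wpM2l (ltW snpos) noise) _.
have <- : sn * Num.sqrt (m / n%:R) = Num.sqrt m.
  by rewrite -sqrtrM ?ler0n // mulrCA mulfV ?mulr1 ?gt_eqF.
by rewrite le_eqVlt; apply/orP; left; apply/eqP; ring.
Qed.

Section CriticalPointError.
Variables (n d r : nat) (X : 'I_n -> 'M[R]_d) (eps : 'I_n -> R) (lam : R).
Variables U Y : 'M[R]_(d, r).
Hypothesis soc : second_order_critical (floss X (obs X eps (Y *m Y^T)) lam) U.
Local Notation E := (U *m U^T - Y *m Y^T).
Local Notation D := ((U - Y) *m (U - Y)^T).

(* Four times the gradient along [U - Y] subtracted from the Hessian along
   [U - Y]: the combination in which the cross terms [X(E) X(D)] cancel. *)
Lemma critical_descent :
  0 <= 2 * \sum_i eps i * sens X E i + \sum_i eps i * sens X D i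
       - 3 / 2 * \sum_i sens X E i ^+ 2 + 2^-1 * \sum_i sens X D i ^+ 2
       + lam * (frob (U - Y) (U - Y) - 4 * frob U (U - Y)).
Proof.
case: (second_order_critical_dir (U - Y) soc).
have -> : U *m (U - Y)^T + (U - Y) *m U^T = E + D.
  rewrite linearB /= !mulmxBr !mulmxBl.
  move: (U *m U^T) (U *m Y^T) (Y *m U^T) (Y *m Y^T) => a b c e.
  by apply/matrixP => i j; rewrite !mxE; lra.
set Se := \sum_i sens X E i ^+ 2; set Sd := \sum_i sens X D i ^+ 2.
set Sed := \sum_i sens X E i * sens X D i.
set We := \sum_i eps i * sens X E i; set Wd := \sum_i eps i * sens X D i.
have -> : \sum_i (eps i - sens X E i) * sens X (E + D) i = We + Wd - Se - Sed.
  rewrite /We /Wd /Se /Sed -big_split -!sumrB; apply: eq_bigr => i _.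
  by rewrite /= (sensD X E D); ring.
have -> : \sum_i sens X (E + D) i ^+ 2 = Se + 2 * Sed + Sd.
  rewrite /Se /Sed /Sd mulr_sumr -!big_split; apply: eq_bigr => i _.
  by rewrite /= (sensD X E D); ring.
have -> : \sum_i (eps i - sens X E i) * sens X D i = Wd - Sed.
  by rewrite /Wd /Sed -sumrB; apply: eq_bigr => i _; ring.
by rewrite mulrBr => *; lra.
Qed.

Lemma critical_point_error_le (delta K : R) :
  mx_symmetric (Y^T *m U) -> mx_psd (Y^T *m U) ->
  0 <= lam -> 0 <= delta -> delta <= 10^-1 -> 0 <= K ->
  (forall A : 'M[R]_d, mx_symmetric A -> (\rank A <= 2 * r)%N ->
     (1 - delta) * frobn A ^+ 2 <= \sum_(i < n) sens X A i ^+ 2 /\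
     \sum_(i < n) sens X A i ^+ 2 <= (1 + delta) * frobn A ^+ 2) ->
  (forall A : 'M[R]_d, mx_symmetric A -> (\rank A <= 2 * r)%N ->
     `| \sum_i eps i * sens X A i | <= K * frobn A) ->
  frobn E <= 16 * (K + lam * Num.sqrt r%:R).
Proof.
move=> symN psdN lam0 delta0 delta_small K0 rip noise.
have symE := mx_symmetric_outer_sub U Y; have rankE := rank_outer_sub_le U Y.
have symD := mx_symmetric_outer (U - Y).
have rankD : (\rank D <= 2 * r)%N.
  by apply: leq_trans (rank_mul_tr_le _ _) _; rewrite leq_pmull.
set x := frobn E; set s := Num.sqrt r%:R.
have [ripE _] := rip E symE rankE; have [_ ripD] := rip D symD rankD.
have DE2 : frobn D ^+ 2 <= 2 * x ^+ 2.
  by rewrite /x !frobn_sqr; exact: frob_outer_sub_le.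
have DE : frobn D <= 2 * x.
  rewrite -(@ler_pXn2r _ 2) ?nnegrE ?frobn_ge0 ?mulr_ge0 ?frobn_ge0 //.
  by apply: le_trans DE2 _; rewrite exprMn ler_wpM2r ?sqr_ge0 //; lra.
have noiseE := le_trans (ler_norm _) (noise E symE rankE).
have noiseD := le_trans (ler_norm _) (noise D symD rankD).
have {}noiseD := le_trans noiseD (ler_wpM2l K0 DE).
have {}ripD : \sum_i sens X D i ^+ 2 <= (1 + delta) * (2 * x ^+ 2).
  by apply: le_trans ripD (ler_wpM2l _ DE2); lra.
have reg := ler_wpM2l lam0 (regulariser_descent_le U Y); rewrite -/x -/s in reg.
have dx : delta * x ^+ 2 <= 10^-1 * x ^+ 2 by rewrite ler_wpM2r ?sqr_ge0.
rewrite -/x in ripE noiseE; have desc := critical_descent.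
have x2 : x ^+ 2 <= 16 * (K + lam * s) * x by lra.
have [->|x0] := eqVneq x 0; first by rewrite mulr_ge0 ?addr_ge0 ?mulr_ge0 ?sqrtr_ge0.
by rewrite expr2 ler_pM2r ?lt_def ?x0 ?frobn_ge0 in x2.
Qed.

End CriticalPointError.

End ErrorBound.

Section Conclusion.
Variable R : realType.

Lemma scaled_factor d r (c : R) (V : 'M[R]_(d, r)) (Lam : 'rV[R]_r) :
  0 <= c -> (forall j, 0 <= Lam 0 j) ->
  exists Y0 : 'M[R]_(d, r), c *: (V *m diag_mx Lam *m V^T) = Y0 *m Y0^T.
Proof.
move=> c0 Lam0; pose L : 'rV[R]_r := \row_j Num.sqrt (Lam 0 j).
exists (Num.sqrt c *: (V *m diag_mx L)).
have LL : diag_mx L *m diag_mx L = diag_mx Lam.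
  rewrite mul_mx_diag; apply/matrixP => i j; rewrite !mxE.
  by case: eqVneq => [->|_]; rewrite ?mulr0n ?mul0r // !mulr1n -expr2 sqr_sqrtr.
rewrite linearZ /= trmx_mul tr_diag_mx -scalemxAl -scalemxAr scalerA -expr2.
by rewrite sqr_sqrtr // -LL !mulmxA.
Qed.

Lemma exists_aligned_factor d r (U Y0 : 'M[R]_(d, r)) : exists Y : 'M[R]_(d, r),
  [/\ Y *m Y^T = Y0 *m Y0^T, mx_symmetric (Y^T *m U) & mx_psd (Y^T *m U)].
Proof.
have [Q [Qo Qmax]] := exists_aligning_orthogonal U Y0.
exists (Y0 *m Q); split; [|exact: mxtrace_max_sym Qmax|exact: mxtrace_max_psd Qmax].
by rewrite trmx_mul mulmxA -(mulmxA Y0) (mulmx1C Qo) mulmx1.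
Qed.

Lemma error_bound_rescaled (Cev C4 C5 c0 sigma lam sd s F : R) :
  0 < Cev -> 0 < C4 -> C4 <= C5 -> 0 < c0 -> c0 <= C4 / (4 * (16 * (Cev + C5))) ->
  0 < sigma -> 0 < sd -> 1 <= s ->
  C4 * sd <= lam / sigma -> lam / sigma <= C5 * sd ->
  F <= 16 * (Cev * sigma * (sd * s) + lam * s) ->
  (sd * s)^-1 * F <= 16 * (Cev + C5) * sigma /\ F < lam / (2 * (c0 / s)).
Proof.
move=> Cev0 C40 C45 c00 c0_small sigma0 sd0 s1; set C := 16 * (Cev + C5).
have C0 : 0 < C by rewrite mulr_gt0 ?addr_gt0 //; lra.
rewrite ler_pdivlMr // => lam_ge; rewrite ler_pdivrMr // => lam_le err.
rewrite ler_pdivlMr in c0_small; last by rewrite mulr_gt0.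
have P0 : 0 < sigma * sd * s by rewrite !mulr_gt0 //; lra.
have errP : F <= C * (sigma * sd * s).
  apply: le_trans err _; rewrite /C.
  have : lam * s <= C5 * sd * sigma * s by rewrite ler_wpM2r //; lra.
  nra.
split.
  rewrite mulrC ler_pdivrMr ?mulr_gt0 //; last lra.
  by apply: le_trans errP _; rewrite le_eqVlt; apply/orP; left; apply/eqP; ring.
have -> : lam / (2 * (c0 / s)) = lam * s / (2 * c0).
  by field; rewrite !gt_eqF //; lra.
rewrite ltr_pdivlMr; last lra.
have := ler_wpM2r (ltW P0) c0_small; have := ler_wpM2r (ltW (lt_le_trans ltr01 s1)) lam_ge.
have c02 : 0 <= 2 * c0 by lra.
have := ler_wpM2r c02 errP; have := mulr_gt0 C40 P0; rewrite -/C; lra.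
Qed.

End Conclusion.

Theorem lemma3 (R : realType) (kappa C4 C5 Cev smin : R) :
  0 < kappa -> 0 < C4 -> C4 <= C5 -> 0 < Cev -> 0 < smin ->
  exists C1min : R, forall C1 : R, C1min <= C1 ->
  forall C2 : R, C1 < C2 ->
  exists C3min : R, forall C3 : R, C3min <= C3 ->
  exists c0max : R, 0 < c0max /\ forall c0 : R, 0 < c0 -> c0 <= c0max ->
  exists C : R, 0 < C /\
  forall (d n r : nat) (sigma lam lamr : R)
    (V : 'M[R]_(d, r)) (Lam : 'rV[R]_r) (M : 'M[R]_d)
    (X : 'I_n -> 'M[R]_d) (eps : 'I_n -> R) (U : 'M[R]_(d, r)),
    (0 < d)%N -> (0 < n)%N -> (0 < r)%N -> 0 < sigma ->
    (* M symmetric PSD of rank r *)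
    mx_symmetric M -> mx_psd M -> \rank M = r ->
    (* Assumption 1 *)
    V^T *m V = 1%:M ->
    (forall j, 0 < Lam 0 j) ->
    M = Num.sqrt (d%:R) *: (V *m diag_mx Lam *m V^T) ->
    (exists j, Lam 0 j = lamr) -> (forall j, lamr <= Lam 0 j) ->
    C1 * Num.sqrt (r%:R) < lamr / sigma -> lamr / sigma < C2 * Num.sqrt (r%:R) ->
    opnorm_le M (kappa * lamr * Num.sqrt (d%:R)) ->
    smin <= sigma ->
    (* Assumption 2 *)
    C3 * r%:R <= n%:R / (d * r)%:R ->
    (* Assumption 3 *)
    C4 * Num.sqrt (d%:R) <= lam / sigma -> lam / sigma <= C5 * Num.sqrt (d%:R) ->
    (* the design matrices lie in the support of GOE(d) *)
    (forall i, mx_symmetric (X i)) ->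
    (* the event E_Good with delta_{2r} = c0 / sqrt r *)
    event_good r X eps sigma (c0 / Num.sqrt (r%:R)) Cev ->
    (* U is a second-order critical point of f^{(lam)} *)
    second_order_critical (floss X (obs X eps M) lam) U ->
    (Num.sqrt ((d * r)%:R))^-1 * frobn (U *m U^T - M) <= C * sigma /\
    frobn (U *m U^T - M) < lam / (2 * (c0 / Num.sqrt (r%:R))).
Proof.
move=> _ C4pos C45 Cevpos _; exists 0 => C1 _ C2 _; exists 0 => C3 _.
set C := 16 * (Cev + C5).
have Cpos : 0 < C by rewrite mulr_gt0 ?addr_gt0 //; lra.
exists (Num.min 10^-1 (C4 / (4 * C))); split.
  by rewrite lt_min invr_gt0 ltr0n /= divr_gt0 // mulr_gt0.
move=> c0 c0pos; rewrite le_min => /andP[c0_small c0_le]; exists C; split => //.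
move=> d n r sigma lam lamr V Lam M X eps U d0 n0 r0 sigma0 _ _ _ _ Lam0 MV _ _ _ _ _ _ _
  lam_ge lam_le _ [_ [rip noise]] soc.
have [Y0 MY0] := scaled_factor V (sqrtr_ge0 d%:R) (fun j => ltW (Lam0 j)).
have [Y [YY0 symN psdN]] := exists_aligned_factor U Y0.
rewrite MV MY0 -YY0 in soc *.
have s1 : 1 <= Num.sqrt r%:R :> R by rewrite -[X in X <= _]sqrtr1 ler_sqrt ?ler1n.
have lam0 : 0 <= lam.
  have : 0 <= lam / sigma by apply: le_trans lam_ge; rewrite mulr_ge0 ?sqrtr_ge0 ?ltW.
  by rewrite pmulr_lge0 ?invr_gt0.
have err : frobn (U *m U^T - Y *m Y^T)
           <= 16 * (Cev * sigma * Num.sqrt (d * r)%:R + lam * Num.sqrt r%:R).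
  apply: (critical_point_error_le soc symN psdN lam0 _ _ _ rip).
  - by rewrite divr_ge0 ?sqrtr_ge0 ?ltW.
  - by apply: le_trans _ c0_small; rewrite ler_pdivrMr ?ler_peMr ?(ltW c0pos) //; lra.
  - by rewrite !mulr_ge0 ?sqrtr_ge0 ?ltW.
  - by move=> A symA rankA; apply: sum_noise_sens_le n0 (ler0n _ _) (noise A symA rankA).
rewrite natrM sqrtrM ?ler0n // in err *.
apply: error_bound_rescaled Cevpos C4pos C45 c0pos c0_le sigma0 _ s1 lam_ge lam_le err.
by rewrite sqrtr_gt0 ltr0n.
Qed.
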